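(* Let $C_k=\frac{1}{k+1}\binom{2k}{k}$ and let $S_n=\sum_{k=0}^n\binom{n+k}{2k}C_k$ (the large Schroeder numbers), and let $s_n$ be the little Schroeder numbers, defined by $\sum_{n\ge0}s_nx^n=\frac{1+x-\sqrt{1-6x+x^2}}{4x}$. Then $(S_n)_{n\ge0}$ is the moment sequence of the family of orthogonal polynomials whose coefficient array is the Riordan array $\left(\frac{1}{1+2x},\frac{x}{1+3x+2x^2}\right)$, and $(s_n)_{n\ge0}$ is the moment sequence of the family of orthogonal polynomials whose coefficient array is the Riordan array $\left(\frac{1}{1+x},\frac{x}{1+3x+2x^2}\right)$.
   Context: For power series $g(x)=g_0+g_1x+\cdots$ with $g_0\neq0$ and $f(x)=f_1x+f_2x^2+\cdots$, the Riordan array $(g,f)$ is the infinite lower-triangular matrix $T$ with entries $T_{n,k}=[x^n]\,g(x)f(x)^k$, where $[x^n]$ extracts the coefficient of $x^n$. A Riordan array $T$ is the coefficient array of the family of polynomials $P_n(x)=\sum_{k=0}^nT_{n,k}x^k$ ($n\ge0$). Saying that a sequence $(\mu_n)$ is the moment sequence of this (monic) family of orthogonal polynomials means: the linear functional $L$ on polynomials with $L(x^n)=\mu_n$ satisfies $L(P_mP_n)=0$ for $m\neq n$ and $L(P_n^2)\neq0$; equivalently, $(\mu_n)$ is the first column of the inverse matrix $T^{-1}$. *)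

From mathcomp Require Import all_boot all_order all_algebra.
Set Implicit Arguments. Unset Strict Implicit. Unset Printing Implicit Defensive.
Import Order.TTheory GRing.Theory Num.Theory.
Local Open Scope ring_scope.

Definition fps := nat -> rat.

Definition fps_of_seq (s : seq rat) : fps := fun n => s`_n.

Definition fX : fps := fun n => if n == 1%N then 1 else 0.

Definition fmul (a b : fps) : fps :=
  fun n => \sum_(i < n.+1) a i * b (n - i)%N.

Fixpoint fpow (a : fps) (k : nat) : fps :=
  if k is k'.+1 then fmul a (fpow a k') else (fun n => if n == 0%N then 1 else 0).

Fixpoint fps_inv_upto (a : fps) (n : nat) : seq rat :=
  if n is n'.+1 then
    let l := fps_inv_upto a n' in
    rcons l (- (a 0%N)^-1 * \sum_(k < n'.+1) a k.+1 * l`_(n' - k))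
  else [:: (a 0%N)^-1].
Definition fps_inv (a : fps) : fps := fun n => (fps_inv_upto a n)`_n.

(* square root of a series with constant term 1 (the one with constant term 1):
   q 0 = 1, q n = (c n - sum_{k=1}^{n-1} q k q (n-k)) / 2 *)
Fixpoint fps_sqrt_upto (c : fps) (n : nat) : seq rat :=
  if n is n'.+1 then
    let l := fps_sqrt_upto c n' in
    rcons l ((c n'.+1 - \sum_(1 <= k < n'.+1) l`_k * l`_(n'.+1 - k)) / 2)
  else [:: 1].
Definition fps_sqrt (c : fps) : fps := fun n => (fps_sqrt_upto c n)`_n.

Definition riordan (g f : fps) (n k : nat) : rat := fmul g (fpow f k) n.

Definition riordan_poly (g f : fps) (n : nat) : {poly rat} :=
  \poly_(k < n.+1) riordan g f n k.

Definition moment_functional (mu : nat -> rat) (p : {poly rat}) : rat :=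
  \sum_(i < size p) p`_i * mu i.

Definition is_moment_sequence (mu : nat -> rat) (P : nat -> {poly rat}) : Prop :=
  (forall m n : nat, m <> n -> moment_functional mu (P m * P n) = 0) /\
  (forall n : nat, moment_functional mu (P n * P n) <> 0).

Definition catalan (k : nat) : rat := 'C(k.*2, k)%:R / k.+1%:R.

Definition large_schroeder (n : nat) : rat :=
  \sum_(k < n.+1) 'C(n + k, k.*2)%:R * catalan k.

(* sum s_n x^n = (1 + x - sqrt(1 - 6x + x^2)) / (4x) *)
Definition little_schroeder (n : nat) : rat :=
  (fps_of_seq [:: 1; 1] n.+1 - fps_sqrt (fps_of_seq [:: 1; -6; 1]) n.+1) / 4.

From Corelib Require Import Setoid Morphisms.
From mathcomp Require Import all_boot all_order all_algebra.
From mathcomp Require Import ring zify.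
Unset Printing Implicit Defensive.
Import Order.TTheory GRing.Theory Num.Theory.
Local Open Scope ring_scope.

(* Both arrays are (1/(1 + beta x), x/(1 + a x + b x^2)) with a = 3, b = 2 and
   b = beta (a - beta), i.e. beta = 2 or 1.  Their rows satisfy
   x P_k = P_(k+1) + alpha_k P_k + lambda_k P_(k-1) with alpha_0 = beta, lambda_0 = 0
   and alpha_k = a, lambda_k = b for k >= 1.  Let W = x (1 + a W + b W^2) be the
   compositional inverse of x/(1 + a x + b x^2) and suppose mu = 1 + x mu (beta + b W).
   Then the Riordan array (mu, W) has the transposed recurrence, and comparing the two
   gives L(x^n P_k) = b^k [x^n] mu W^k.  Since mu W^k = x^k + O(x^(k+1)) this vanishes
   for n < k and equals b^k for n = k, which is orthogonality.  The little Schroeder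
   series is 1 + W by its definition through a square root; the large one is 1 + 2 W,
   because both S = C(x/(1-x)^2)/(1-x) and 1 + 2 W solve S = 1 + x (S + S^2). *)

Definition eqmodX (N : nat) (p q : {poly rat}) : Prop :=
  forall i, (i < N)%N -> p`_i = q`_i.

Notation "p = q %[modX N ]" := (eqmodX N p q)
  (at level 70, q at next level,
   format "'[hv ' p '/'  =  q '/'  %[modX  N ] ']'") : ring_scope.

#[export] Instance eqmodX_equiv N : Equivalence (eqmodX N).
Proof.
split; first by move=> p i.
- by move=> p q H i Hi; rewrite H.
- by move=> p q r H1 H2 i Hi; rewrite H1 ?H2.
Qed.

#[export] Instance eqmodX_add N : Proper (eqmodX N ==> eqmodX N ==> eqmodX N) +%R.
Proof. by move=> p p' Hp q q' Hq i Hi; rewrite !coefD Hp ?Hq. Qed.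

#[export] Instance eqmodX_opp N : Proper (eqmodX N ==> eqmodX N) -%R.
Proof. by move=> p p' Hp i Hi; rewrite !coefN Hp. Qed.

#[export] Instance eqmodX_mul N : Proper (eqmodX N ==> eqmodX N ==> eqmodX N) *%R.
Proof.
move=> p p' Hp q q' Hq i Hi; rewrite !coefM; apply: eq_bigr => j _.
have Hj : (j < N)%N by apply: leq_ltn_trans Hi; rewrite -ltnS.
by rewrite Hp ?Hq //; apply: leq_ltn_trans Hi; apply: leq_subr.
Qed.

#[export] Instance eqmodX_exp N :
  Proper (eqmodX N ==> eq ==> eqmodX N) (@GRing.exp {poly rat}).
Proof.
move=> p p' Hp k _ <-; elim: k => [|k IH]; first by rewrite !expr0.
by rewrite !exprS IH Hp.
Qed.

Lemma eq_eqmodX N p q : p = q -> p = q %[modX N].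
Proof. by move=> ->. Qed.

Lemma eqmodX_mul2l N p q q' : q = q' %[modX N] -> p * q = p * q' %[modX N].
Proof. by move=> ->. Qed.

Lemma eqmodX_mulX N p q : 'X * p = 'X * q %[modX N.+1] <-> p = q %[modX N].
Proof.
split=> H i Hi; first by have := H i.+1 Hi; rewrite !coefXM.
by rewrite !coefXM; case: i Hi => //= i; apply: H.
Qed.

Definition trunc (N : nat) (a : fps) : {poly rat} := \poly_(i < N) a i.

Lemma coef_trunc N a i : (trunc N a)`_i = if (i < N)%N then a i else 0.
Proof. exact: coef_poly. Qed.

Lemma trunc_le M N a : (M <= N)%N -> trunc N a = trunc M a %[modX M].
Proof. by move=> MN i Hi; rewrite !coef_trunc Hi (leq_trans Hi MN). Qed.

Lemma trunc_fmul N a b : trunc N (fmul a b) = trunc N a * trunc N b %[modX N].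
Proof.
move=> i Hi; rewrite coef_trunc Hi coefM; apply: eq_bigr => j _.
have Hj : (j < N)%N by apply: leq_ltn_trans Hi; rewrite -ltnS.
by rewrite !coef_trunc Hj (leq_ltn_trans (leq_subr j i) Hi).
Qed.

Lemma trunc_fpow N a k : trunc N (fpow a k) = trunc N a ^+ k %[modX N].
Proof.
elim: k => [|k IH] /=.
  by move=> i Hi; rewrite coef_trunc Hi coef1; case: eqP.
by rewrite trunc_fmul IH exprS.
Qed.

Lemma trunc_fps_of_seq N s : trunc N (fps_of_seq s) = Poly s %[modX N].
Proof. by move=> i Hi; rewrite coef_trunc Hi coef_Poly. Qed.

Lemma trunc_fX N : trunc N fX = 'X %[modX N].
Proof. by move=> i Hi; rewrite coef_trunc Hi coefX /fX; case: eqP. Qed.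

Lemma coef_riordan_eqmodX N g f G F n k : (n < N)%N ->
  trunc N g = G %[modX N] -> trunc N f = F %[modX N] -> riordan g f n k = (G * F ^+ k)`_n.
Proof.
move=> Hn gG fF; have := trunc_fmul N g (fpow f k) n Hn.
rewrite coef_trunc Hn /riordan => ->.
have E : trunc N g * trunc N (fpow f k) = G * F ^+ k %[modX N] by rewrite trunc_fpow gG fF.
exact: E n Hn.
Qed.

Lemma Poly_cons (a : rat) s : Poly (a :: s) = a%:P + 'X * Poly s.
Proof. by rewrite /= cons_poly_def addrC mulrC. Qed.

Lemma size_fps_inv_upto a n : size (fps_inv_upto a n) = n.+1.
Proof. by elim: n => [|n IH] //=; rewrite size_rcons IH. Qed.

Lemma nth_fps_inv_upto a n i : (i <= n)%N -> (fps_inv_upto a n)`_i = fps_inv a i.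
Proof.
rewrite /fps_inv; elim: n => [|n IH]; first by rewrite leqn0 => /eqP ->.
rewrite leq_eqVlt => /orP[/eqP -> //|Hi].
by rewrite /= nth_rcons size_fps_inv_upto Hi IH.
Qed.

Lemma fps_invS a n : fps_inv a n.+1 =
  - (a 0%N)^-1 * \sum_(k < n.+1) a k.+1 * fps_inv a (n - k)%N.
Proof.
rewrite {1}/fps_inv /= nth_rcons size_fps_inv_upto ltnn eqxx.
by congr (_ * _); apply: eq_bigr => k _; rewrite nth_fps_inv_upto ?leq_subr.
Qed.

Lemma fmul_fps_inv a n : a 0%N != 0 -> fmul a (fps_inv a) n = (n == 0%N)%:R.
Proof.
move=> a0; rewrite /fmul; case: n => [|n].
  by rewrite big_ord1 divff.
rewrite big_ord_recl subn0 fps_invS mulrA mulrN divff // mulN1r addrC.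
by apply/eqP; rewrite subr_eq0; apply/eqP/eq_bigr => k _; rewrite subSS.
Qed.

Lemma trunc_fps_inv N a : a 0%N != 0 -> trunc N a * trunc N (fps_inv a) = 1 %[modX N].
Proof.
by move=> a0 i Hi; rewrite -(trunc_fmul N _ _ i Hi) coef_trunc Hi fmul_fps_inv // coef1.
Qed.

Lemma size_fps_sqrt_upto c n : size (fps_sqrt_upto c n) = n.+1.
Proof. by elim: n => [|n IH] //=; rewrite size_rcons IH. Qed.

Lemma nth_fps_sqrt_upto c n i : (i <= n)%N -> (fps_sqrt_upto c n)`_i = fps_sqrt c i.
Proof.
rewrite /fps_sqrt; elim: n => [|n IH]; first by rewrite leqn0 => /eqP ->.
rewrite leq_eqVlt => /orP[/eqP -> //|Hi].
by rewrite /= nth_rcons size_fps_sqrt_upto Hi IH.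
Qed.

Lemma fps_sqrtS c n : fps_sqrt c n.+1 =
  (c n.+1 - \sum_(k < n) fps_sqrt c k.+1 * fps_sqrt c (n - k)%N) / 2.
Proof.
rewrite {1}/fps_sqrt /= nth_rcons size_fps_sqrt_upto ltnn eqxx big_add1 big_mkord.
congr ((_ - _) / _); apply: eq_bigr => k _.
by rewrite subSS !nth_fps_sqrt_upto // ?leq_subr // ltnW.
Qed.

Lemma fmul_fps_sqrt c n : c 0%N = 1 -> fmul (fps_sqrt c) (fps_sqrt c) n = c n.
Proof.
move=> c0; rewrite /fmul; case: n => [|n].
  by rewrite big_ord1 c0 mulr1.
rewrite big_ord_recl big_ord_recr /= subn0 subnn fps_sqrtS.
have -> : fps_sqrt c 0 = 1 by [].
by set s := \sum_(k < n) _; field.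
Qed.

Lemma trunc_fps_sqrt N c : c 0%N = 1 -> trunc N (fps_sqrt c) ^+ 2 = trunc N c %[modX N].
Proof.
by move=> c0 i Hi; rewrite expr2 -(trunc_fmul N _ _ i Hi) !coef_trunc Hi fmul_fps_sqrt.
Qed.

Lemma eqmodX_fixpoint_uniq (G : {poly rat} -> {poly rat}) (A B : fps) :
  (forall N p q, p = q %[modX N] -> G p = G q %[modX N.+1]) ->
  (forall N, trunc N A = G (trunc N A) %[modX N]) ->
  (forall N, trunc N B = G (trunc N B) %[modX N]) ->
  A =1 B.
Proof.
move=> G_contr A_fix B_fix.
have AB N : trunc N A = trunc N B %[modX N].
  elim: N => [|N IH]; first by [].
  rewrite (A_fix N.+1) (B_fix N.+1); apply: G_contr.
  by rewrite !(trunc_le N N.+1).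
by move=> n; have := AB n.+1 n (ltnSn n); rewrite !coef_trunc ltnSn.
Qed.

Lemma eqmodX_ode_zero (c : rat) N (H : {poly rat}) : H`_0 = 0 ->
  (1 - c%:P * 'X) * H^`() = - c%:P * H %[modX N] -> H = 0 %[modX N.+1].
Proof.
(* On coefficients the equation reads (j + 1) H_(j+1) = c (j - 1) H_j. *)
move=> H0 ode; suff HN j : (j <= N)%N -> H`_j = 0 by move=> j Hj; rewrite coef0 HN.
elim: j => [//|j IH] Hj.
have XD : ('X * H^`())`_j = H`_j *+ j by case: j {IH Hj} => [|j]; rewrite coefXM ?coef_deriv.
have := ode j Hj; rewrite mulrBl mul1r -mulrA mulNr coefN coefB !coefCM XD coef_deriv.
rewrite IH ?(ltnW Hj) // mul0rn !mulr0 subr0 => /eqP.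
by rewrite mulrn_eq0 => /orP[|/eqP].
Qed.

Lemma eqmodX_comp N p q Z : p = q %[modX N] -> p \Po ('X * Z) = q \Po ('X * Z) %[modX N].
Proof.
move=> pq; set d := p - q.
have d_low : take_poly N d = 0.
  apply/polyP => i; rewrite coef_take_poly coef0; case: ifP => // Hi.
  by rewrite coefB pq // subrr.
have d_high : d = drop_poly N d * 'X^N by rewrite -{1}(poly_take_drop N d) d_low add0r.
rewrite -(subrK q p) -/d d_high comp_polyD comp_polyM comp_Xn_poly exprMn mulrCA => i Hi.
by rewrite coefD coefXnM Hi add0r.
Qed.

Section MomentFunctional.
Variable mu : nat -> rat.
Let L := moment_functional mu.

Lemma moment_functional_widen N (p : {poly rat}) :
  (size p <= N)%N -> L p = \sum_(i < N) p`_i * mu i.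
Proof.
move=> sizeN; rewrite /L /moment_functional (big_ord_widen N (fun i => p`_i * mu i) sizeN).
rewrite big_mkcond /=; apply: eq_bigr => i _; case: ltnP => // Hi.
by rewrite nth_default ?mul0r.
Qed.

Lemma moment_functional0 : L 0 = 0.
Proof. by rewrite /L /moment_functional size_poly0 big_ord0. Qed.

Lemma moment_functionalD (p q : {poly rat}) : L (p + q) = L p + L q.
Proof.
set N := maxn (size p) (size q).
rewrite !(moment_functional_widen N) ?leq_maxl ?leq_maxr ?(leq_trans (size_polyD p q)) //.
by rewrite -big_split; apply: eq_bigr => i _; rewrite coefD mulrDl.
Qed.

Lemma moment_functionalZ a (p : {poly rat}) : L (a *: p) = a * L p.
Proof.
rewrite (moment_functional_widen (size p)) ?size_scale_leq // /L /moment_functional.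
by rewrite mulr_sumr; apply: eq_bigr => i _; rewrite coefZ mulrA.
Qed.

Lemma moment_functionalXn n : L 'X^n = mu n.
Proof.
rewrite /L /moment_functional size_polyXn big_ord_recr /= coefXn eqxx mul1r.
by rewrite big1 ?add0r // => i _; rewrite coefXn (ltn_eqF (ltn_ord i)) mul0r.
Qed.

Lemma moment_functional_mull N (p q : {poly rat}) : (size p <= N)%N ->
  L (p * q) = \sum_(j < N) p`_j * L ('X^j * q).
Proof.
move=> sizeN; rewrite -{1}(coefK p) poly_def.
rewrite (big_ord_widen N (fun j => p`_j *: 'X^j) sizeN) big_mkcond /=.
rewrite mulr_suml (big_morph L moment_functionalD moment_functional0).
apply: eq_bigr => j _; case: ltnP => [_|Hj]; first by rewrite -scalerAl moment_functionalZ.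
by rewrite mul0r nth_default // mul0r moment_functional0.
Qed.

End MomentFunctional.

Section Favard.
Variables (mu : nat -> rat) (P : nat -> {poly rat}) (alpha lambda : nat -> rat).
(* A Stieltjes table of mu: its recurrence is the transpose of that of P. *)
Variable c : nat -> nat -> rat.
Hypothesis P0 : P 0%N = 1.
Hypothesis P_rec : forall k, 'X * P k = P k.+1 + alpha k *: P k + lambda k *: P k.-1.
Hypothesis lambda0 : lambda 0%N = 0.
Hypothesis c0 : forall k, c 0%N k = (k == 0%N)%:R.
Hypothesis c_mu : forall n, c n 0%N = mu n.
Hypothesis c_rec : forall n k, c n.+1 k =
  (if k is k'.+1 then c n k' else 0) + alpha k * c n k + lambda k.+1 * c n k.+1.

Let L := moment_functional mu.
Let lambda_prod k := \prod_(i < k) lambda i.+1.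

Lemma P_recE k : P k.+1 = 'X * P k - alpha k *: P k - lambda k *: P k.-1.
Proof. by rewrite P_rec; ring. Qed.

Lemma P_monic k : (size (P k) <= k.+1)%N /\ (P k)`_k = 1.
Proof.
suff PQ : [/\ (size (P k) <= k.+1)%N, (P k)`_k = 1 & (size (P k.-1) <= k.+1)%N].
  by case: PQ.
elim: k => [|k [sizek lead sizek1]]; first by rewrite P0 size_poly1 coef1.
have size_XP : forall j, (k.+1 < j)%N -> (P k.+1)`_j = 0.
  move=> [//|j] Hj; rewrite P_recE !coefB !coefZ coefXM.
  rewrite !nth_default ?mulr0 ?subr0 //=.
  - exact: leq_trans sizek1 (ltnW Hj).
  - exact: leq_trans sizek (ltnW Hj).
  - exact: leq_trans sizek Hj.
split; first by apply/leq_sizeP; exact: size_XP.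
- rewrite P_recE !coefB !coefZ coefXM lead.
  by rewrite !nth_default ?mulr0 ?subr0.
- exact: leq_trans sizek _.
Qed.

Lemma c_triangular n k : (n < k)%N -> c n k = 0.
Proof.
elim: n k => [|n IH] k Hk; first by case: k Hk => // k _; rewrite c0.
case: k Hk => [//|k] Hk.
by rewrite c_rec !IH ?mulr0 ?addr0 //; lia.
Qed.

Lemma c_diag k : c k k = 1.
Proof.
elim: k => [|k IH]; first by rewrite c0.
by rewrite c_rec IH !c_triangular ?mulr0 ?addr0.
Qed.

Lemma moment_XnP_rec n k : L ('X^(n.+1) * P k)
  = L ('X^n * P k.+1) + alpha k * L ('X^n * P k) + lambda k * L ('X^n * P k.-1).
Proof.
by rewrite /L exprSr -mulrA P_rec !mulrDr -!scalerAr !moment_functionalD !moment_functionalZ.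
Qed.

Lemma moment_XnP n k : L ('X^n * P k) = lambda_prod k * c n k.
Proof.
have step j : (forall m, L ('X^m * P j) = lambda_prod j * c m j) ->
              (forall m, L ('X^m * P j.-1) = lambda_prod j.-1 * c m j.-1) ->
              forall m, L ('X^m * P j.+1) = lambda_prod j.+1 * c m j.+1.
  move=> IHj IHj1 m; have E := moment_XnP_rec m j.
  have -> : L ('X^m * P j.+1) = L ('X^(m.+1) * P j)
             - alpha j * L ('X^m * P j) - lambda j * L ('X^m * P j.-1) by rewrite E; ring.
  rewrite !IHj IHj1 (c_rec m j) /lambda_prod big_ord_recr /=.
  by case: j {IHj IHj1 E} => [|j] /=; rewrite ?lambda0 ?big_ord_recr /=; ring.
move: n; suff [] : (forall n, L ('X^n * P k) = lambda_prod k * c n k) /\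
                  (forall n, L ('X^n * P k.+1) = lambda_prod k.+1 * c n k.+1) by [].
have base n : L ('X^n * P 0%N) = lambda_prod 0%N * c n 0%N.
  by rewrite P0 mulr1 /L moment_functionalXn /lambda_prod big_ord0 mul1r c_mu.
elim: k => [|k [IHk IHk1]]; first by split=> // n; apply: step.
by split=> //; apply: step.
Qed.

Theorem is_moment_sequence_of_table :
  (forall k, lambda k.+1 != 0) -> is_moment_sequence mu P.
Proof.
move=> lambda_neq0.
have LPP m n : (m <= n)%N -> L (P m * P n) = if m == n then lambda_prod n else 0.
  move=> mn; rewrite /L (moment_functional_mull _ m.+1) -/L ?(P_monic m).1 //.
  rewrite big_ord_recr /= big1 => [|j _]; last first.
    by rewrite moment_XnP c_triangular ?mulr0 // (leq_trans (ltn_ord j)).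
  rewrite add0r (P_monic m).2 mul1r moment_XnP.
  case: eqP => [<-|/eqP m_neq_n]; first by rewrite c_diag mulr1.
  by rewrite c_triangular ?mulr0 // ltn_neqAle m_neq_n.
split=> [m n /eqP m_neq_n | n]; rewrite -/L.
- case: (leqP m n) => [mn | nm]; first by rewrite LPP // (negbTE m_neq_n).
  by rewrite mulrC LPP 1?ltnW // eq_sym (negbTE m_neq_n).
- by rewrite LPP // eqxx; apply/eqP/prodf_neq0 => i _.
Qed.

End Favard.

Definition jacobi_alpha (a beta : rat) (k : nat) : rat := if k is _.+1 then a else beta.
Definition jacobi_lambda (b : rat) (k : nat) : rat := if k is _.+1 then b else 0.

Section ProductionMatrix.
Variables (a b beta : rat) (mu W : fps).
(* The A- and Z-sequences of the Riordan array (mu, W) are 1 + a t + b t^2 and beta + b t. *)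
Hypothesis W_eq : forall N,
  trunc N W = 'X * (1 + a%:P * trunc N W + b%:P * trunc N W ^+ 2) %[modX N].
Hypothesis mu_eq : forall N,
  trunc N mu = 1 + 'X * (trunc N mu * (beta%:P + b%:P * trunc N W)) %[modX N].

Lemma riordan_col0 n : riordan mu W n 0 = mu n.
Proof.
rewrite (coef_riordan_eqmodX n.+1 _ _ (trunc n.+1 mu) (trunc n.+1 W)) //.
by rewrite expr0 mulr1 coef_trunc ltnSn.
Qed.

Lemma riordan_row0 k : riordan mu W 0 k = (k == 0%N)%:R.
Proof.
rewrite (coef_riordan_eqmodX 1 _ _ (trunc 1 mu) (trunc 1 W)) // coef0M.
have -> : (trunc 1 mu)`_0 = 1 by rewrite (mu_eq 1 0) // coefD coef1 coefXM.
case: k => [|k]; first by rewrite expr0 coef1 mul1r.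
by rewrite exprS coef0M (W_eq 1 0) // coefXM !mul0r mulr0.
Qed.

Lemma riordan_production n k : riordan mu W n.+1 k =
  (if k is k'.+1 then riordan mu W n k' else 0)
  + jacobi_alpha a beta k * riordan mu W n k + jacobi_lambda b k.+1 * riordan mu W n k.+1.
Proof.
pose N := n.+2; case: k => [|k] /=;
  rewrite !(coef_riordan_eqmodX N _ _ (trunc N mu) (trunc N W)) //.
  rewrite expr0 mulr1 expr1 (mu_eq N n.+1) // coefD coef1 coefXM /= add0r.
  by rewrite mulrDr coefD [_ * beta%:P]mulrC mulrCA !coefCM add0r.
set M := trunc N mu; set V := trunc N W.
have E : M * V ^+ k.+1
    = 'X * (M * V ^+ k + a%:P * (M * V ^+ k.+1) + b%:P * (M * V ^+ k.+2)) %[modX N].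
  transitivity (M * V ^+ k * ('X * (1 + a%:P * V + b%:P * V ^+ 2))).
    by rewrite exprSr mulrA; apply: eqmodX_mul2l; apply: W_eq.
  by apply: eq_eqmodX; rewrite !exprS; ring.
by rewrite (E n.+1) // coefXM /= !coefD !coefCM.
Qed.

End ProductionMatrix.

Section RiordanRecurrence.
Variables a b beta : rat.
Hypothesis b_factor : b = beta * (a - beta).
Let g := fps_inv (fps_of_seq [:: 1; beta]).
Let h := fps_inv (fps_of_seq [:: 1; a; b]).
Let f := fmul fX h.
Let T := riordan g f.
Let P := riordan_poly g f.

Lemma trunc_riordan_g N : trunc N g * (1 + beta%:P * 'X) = 1 %[modX N].
Proof.
have -> : 1 + beta%:P * 'X = Poly [:: 1; beta] by rewrite !Poly_cons /= polyC1; ring.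
by rewrite -(trunc_fps_of_seq N) mulrC trunc_fps_inv ?oner_neq0.
Qed.

Lemma trunc_riordan_h N : trunc N h * (1 + a%:P * 'X + b%:P * 'X ^+ 2) = 1 %[modX N].
Proof.
have -> : 1 + a%:P * 'X + b%:P * 'X ^+ 2 = Poly [:: 1; a; b].
  by rewrite !Poly_cons /= polyC1; ring.
by rewrite -(trunc_fps_of_seq N) mulrC trunc_fps_inv ?oner_neq0.
Qed.

Lemma riordan_trunc N n k : (n < N)%N -> T n k = (trunc N g * ('X * trunc N h) ^+ k)`_n.
Proof. by move=> Hn; apply: (coef_riordan_eqmodX N) => //; rewrite /f trunc_fmul trunc_fX. Qed.

Lemma riordan_vanish n k : (n < k)%N -> T n k = 0.
Proof. by move=> nk; rewrite (riordan_trunc n.+1) // exprMn mulrCA coefXnM nk. Qed.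

Lemma riordan_rec n k :
  T n.+2 k + a * T n.+1 k + b * T n k = if k is k'.+1 then T n.+1 k' else 0.
Proof.
rewrite !(riordan_trunc n.+3) ?ltnS ?leqW //.
set G := trunc n.+3 g; set H := trunc n.+3 h; set Q := 1 + a%:P * 'X + b%:P * 'X ^+ 2.
set p := G * ('X * H) ^+ k.
have -> : p`_n.+2 + a * p`_n.+1 + b * p`_n = (Q * p)`_n.+2.
  have -> : Q * p = p + a%:P * ('X * p) + b%:P * ('X * ('X * p)) by rewrite /Q; ring.
  by rewrite !coefD !coefCM !coefXM.
case: k @p => [|k] p.
  have QG : Q * p = 1 + (a - beta)%:P * 'X %[modX n.+3].
    transitivity (G * (1 + beta%:P * 'X) * (1 + (a - beta)%:P * 'X)).
      by apply: eq_eqmodX; rewrite /p /Q b_factor expr0 mulr1 polyCM polyCB; ring.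
    by rewrite trunc_riordan_g mul1r.
  by rewrite (QG n.+2) // coefD coef1 coefCM coefX mulr0 addr0.
have QH : Q * p = 'X * (G * ('X * H) ^+ k) %[modX n.+3].
  transitivity ('X * (G * ('X * H) ^+ k) * (H * Q)).
    by apply: eq_eqmodX; rewrite /p exprSr; ring.
  by rewrite trunc_riordan_h mulr1.
by rewrite (QH n.+2) // coefXM /= (riordan_trunc n.+3) ?ltnS ?leqW.
Qed.

Lemma riordan_first_rows : [/\ T 0%N 0%N = 1, T 1%N 0%N = - beta & T 1%N 1%N = 1].
Proof.
set G := trunc 2 g; set H := trunc 2 h.
have G0 : G`_0 = 1.
  by have := trunc_riordan_g 2 0 isT; rewrite coef0M !coefE /= mulr0 addr0 mulr1.
have G1 : G`_1 = - beta.
  have := trunc_riordan_g 2 1 isT; rewrite mulrDr mulr1 mulrCA coefD coefCM coefMX /= G0.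
  by rewrite coef1 /= => /eqP; rewrite mulr1 addr_eq0 => /eqP.
have H0 : H`_0 = 1.
  by have := trunc_riordan_h 2 0 isT; rewrite coef0M !coefE /= !mulr0 !addr0 mulr1.
rewrite !(riordan_trunc 2) // expr0 expr1 mulr1 G0 G1; split=> //.
by rewrite mulrCA coefXM /= coef0M G0 H0 mulr1.
Qed.

Lemma coef_riordan_poly n k : (P n)`_k = T n k.
Proof. by rewrite coef_poly; case: ltnP => // nk; rewrite riordan_vanish. Qed.

Lemma riordan_poly0 : P 0%N = 1.
Proof.
have [T00 _ _] := riordan_first_rows.
apply/polyP => j; rewrite coef_riordan_poly coef1.
by case: j => [|j]; rewrite ?T00 ?riordan_vanish.
Qed.

Lemma riordan_poly_rec k :
  'X * P k = P k.+1 + jacobi_alpha a beta k *: P k + jacobi_lambda b k *: P k.-1.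
Proof.
apply/polyP => j; rewrite coefXM !coefD !coefZ !coef_riordan_poly.
have [T00 T10 T11] := riordan_first_rows.
case: k => [|k] /=.
  case: j => [|[|j]] /=; rewrite ?T00 ?T10 ?T11 ?riordan_vanish //; ring.
by rewrite riordan_rec; case: j.
Qed.

End RiordanRecurrence.

Lemma bin_double_succ i : (i.+1 * 'C(i.+1.*2, i.+1) = (4 * i + 2) * 'C(i.*2, i))%N.
Proof.
have := mul_bin_diag i.+1.*2 i; have := mul_bin_down i.*2.+1 i.
rewrite doubleS -!muln2.
move: 'C(_, i) 'C(_, i) 'C(_, i.+1) => x y z; nia.
Qed.

Lemma catalanS i : catalan i.+1 * i.+2%:R = catalan i * (4 * i.+1%:R - 2).
Proof.
have i1_neq0 : (i.+1%:R : rat) != 0 by rewrite pnatr_eq0.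
rewrite /catalan divfK ?pnatr_eq0 //; apply: (mulfI i1_neq0).
have := congr1 (fun m => m%:R : rat) (bin_double_succ i); rewrite /= !natrM natrD => ->.
by move: i1_neq0; rewrite -!natr1 => i1_neq0; field.
Qed.

Lemma catalan_ode N : (1 - 4%:P * 'X) * ('X * trunc N catalan)^`()
  = 1 - 2%:P * ('X * trunc N catalan) %[modX N].
Proof.
move=> j Hj; rewrite mulrBl mul1r -mulrA !coefB !coefCM coef1 coefXM !coef_deriv.
case: j Hj => [|i] Hi; rewrite !coefXM /= !coef_trunc Hi.
  by rewrite /catalan bin0; field.
rewrite (ltnW Hi) -[catalan i.+1 *+ _]mulr_natr -[catalan i *+ _]mulr_natr.
by rewrite catalanS; ring.
Qed.

Lemma catalan_eq N : trunc N catalan = 1 + 'X * trunc N catalan ^+ 2 %[modX N].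
Proof.
set C := trunc N catalan; set F := 'X * C.
pose H := 'X + F ^+ 2 - F.
have H_ode : (1 - 4%:P * 'X) * H^`() = - 4%:P * H %[modX N].
  have -> : (1 - 4%:P * 'X) * H^`() =
      (1 - 4%:P * 'X) + (2%:P * F - 1) * ((1 - 4%:P * 'X) * F^`()).
    by rewrite /H /F !derivE; ring.
  by rewrite catalan_ode -/C; apply: eq_eqmodX; rewrite /H /F; ring.
have H0 : H`_0 = 0 by rewrite !coefE /= expr2 coef0M /F coefXM.
have := eqmodX_ode_zero 4 N H H0 H_ode.
have -> : H = 'X * (1 + 'X * C ^+ 2 - C) by rewrite /H /F; ring.
rewrite -(mulr0 'X) eqmodX_mulX => E.
have {1}-> : C = 1 + 'X * C ^+ 2 - (1 + 'X * C ^+ 2 - C) by ring.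
by rewrite E subr0.
Qed.

Section Geometric.
Variable N : nat.
Let R := trunc N (fun=> 1).

Lemma trunc_geometric : R = 1 + 'X * R %[modX N].
Proof.
move=> i Hi; rewrite coefD coef1 coefXM /R !coef_trunc Hi.
by case: i Hi => [|i] Hi //=; rewrite add0r (ltnW Hi).
Qed.

Lemma coef_geometric_exp m n : (n < N)%N -> (R ^+ m.+1)`_n = 'C(n + m, m)%:R.
Proof.
have R_expS k : R ^+ k.+2 = R ^+ k.+1 + 'X * R ^+ k.+2 %[modX N].
  rewrite {1}exprSr (eqmodX_mul2l _ (R ^+ k.+1) _ _ trunc_geometric).
  by apply: eq_eqmodX; rewrite !exprS; ring.
elim: m n => [|m IHm] n Hn.
  by rewrite expr1 /R coef_trunc Hn addn0 bin0.
elim: n Hn => [|n IHn] Hn.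
  by rewrite (R_expS m 0 Hn) coefD coefXM /= addr0 IHm // !add0n !binn.
rewrite (R_expS m n.+1 Hn) coefD coefXM /= IHm // IHn ?(ltnW Hn) //.
by rewrite -natrD [in RHS]addnS binS addnC !addSn !addnS.
Qed.

Lemma coef_geometric_comp_term k n : (n < N)%N ->
  (R * ('X * R ^+ 2) ^+ k)`_n = 'C(n + k, k.*2)%:R.
Proof.
move=> Hn; rewrite exprMn -exprM mulrCA -exprS coefXnM.
case: ltnP => Hk; first by rewrite bin_small // -addnn ltn_add2r.
rewrite coef_geometric_exp; last exact: leq_ltn_trans (leq_subr _ _) Hn.
by congr (_%:R); congr 'C(_, _); lia.
Qed.

End Geometric.

(* S = R C(x R^2) with R = 1/(1 - x), as [x^n] R (x R^2)^k = 'C(n + k, 2k). *)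
Lemma large_schroeder_eq N : trunc N large_schroeder
  = 1 + 'X * (trunc N large_schroeder + trunc N large_schroeder ^+ 2) %[modX N].
Proof.
set S := trunc N large_schroeder; set R := trunc N (fun=> 1).
set Y := 'X * R ^+ 2; set E := trunc N catalan \Po Y.
have S_RE : S = R * E %[modX N].
  move=> n Hn; rewrite /E /trunc poly_def linear_sum mulr_sumr coef_sum /=.
  under eq_bigr => i _ do rewrite comp_polyZ comp_Xn_poly -scalerAr coefZ.
  under eq_bigr => i _ do rewrite coef_geometric_comp_term //.
  rewrite coef_trunc Hn /large_schroeder.
  rewrite (big_ord_widen N (fun k => 'C(n + k, k.*2)%:R * catalan k) Hn) big_mkcond /=.
  apply: eq_bigr => i _; rewrite mulrC; case: ltnP => // Hi.
  by rewrite bin_small ?mulr0 // -addnn ltn_add2r.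
have E_eq : E = 1 + Y * E ^+ 2 %[modX N].
  have -> : 1 + Y * E ^+ 2 = (1 + 'X * trunc N catalan ^+ 2) \Po Y.
    by rewrite comp_polyD comp_polyC comp_polyM comp_polyX !expr2 comp_polyM.
  exact: eqmodX_comp (catalan_eq N).
have R_eq : R = 1 + 'X * R %[modX N] := trunc_geometric N.
rewrite S_RE; transitivity (E * (1 + 'X * R)); first by rewrite -R_eq mulrC.
have -> : 1 + 'X * (R * E + (R * E) ^+ 2) = E * ('X * R) + (1 + Y * E ^+ 2).
  by rewrite /Y; ring.
by rewrite -E_eq; apply: eq_eqmodX; ring.
Qed.

Definition schroeder_W : fps := fun n => little_schroeder n - (n == 0)%:R.

Lemma trunc_schroeder_W N :
  trunc N schroeder_W = trunc N little_schroeder - 1 %[modX N].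
Proof. by move=> i Hi; rewrite coefB coef1 !coef_trunc Hi. Qed.

(* The definition of little_schroeder, solved for the square root. *)
Lemma trunc_sqrt_schroeder N :
  trunc N (fps_sqrt (fps_of_seq [:: 1; -6; 1]))
  = 1 - 3%:P * 'X - 4%:P * ('X * trunc N schroeder_W) %[modX N].
Proof.
move=> i Hi; rewrite coef_trunc Hi !(coefB, coefCM, coefXM, coef1, coefX).
case: i Hi => [//|i] Hi /=; rewrite !coef_trunc (ltnW Hi) /schroeder_W /little_schroeder.
by case: i {Hi} => [|i]; rewrite /fps_of_seq /= ?nth_nil; field.
Qed.

Lemma schroeder_W_eq N : trunc N schroeder_W
  = 'X * (1 + 3%:P * trunc N schroeder_W + 2%:P * trunc N schroeder_W ^+ 2) %[modX N].
Proof.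
rewrite -!(trunc_le N N.+1 schroeder_W) //; set W := trunc N.+1 schroeder_W.
set A := 1 + 3%:P * W + 2%:P * W ^+ 2.
have sq := trunc_fps_sqrt N.+1 (fps_of_seq [:: 1; -6; 1]) erefl.
rewrite trunc_sqrt_schroeder trunc_fps_of_seq -/W in sq.
have : 'X * (8%:P * ('X * A - W)) = 'X * 0 %[modX N.+1].
  transitivity ((1 - 3%:P * 'X - 4%:P * ('X * W)) ^+ 2 - Poly [:: 1; -6; 1]).
    by apply: eq_eqmodX; rewrite /A !Poly_cons /= polyCN polyC1; ring.
  by rewrite sq subrr mulr0.
rewrite eqmodX_mulX => A_W.
have -> : W = 'X * A - (8^-1)%:P * (8%:P * ('X * A - W)).
  by rewrite mulrA -polyCM mulVf // mul1r; ring.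
by rewrite A_W mulr0 subr0.
Qed.

Lemma little_schroeder_moment_eq N : trunc N little_schroeder
  = 1 + 'X * (trunc N little_schroeder * (1%:P + 2%:P * trunc N schroeder_W)) %[modX N].
Proof.
have -> : trunc N little_schroeder = 1 + trunc N schroeder_W %[modX N].
  by rewrite trunc_schroeder_W; apply: eq_eqmodX; ring.
transitivity (1 + 'X * (1 + 3%:P * trunc N schroeder_W + 2%:P * trunc N schroeder_W ^+ 2)).
  by rewrite -schroeder_W_eq.
by apply: eq_eqmodX; rewrite polyC1; ring.
Qed.

Lemma large_schroeder_little n : large_schroeder n = (n == 0)%:R + 2 * schroeder_W n.
Proof.
pose G p : {poly rat} := 1 + 'X * (p + p ^+ 2).
pose B : fps := fun n => (n == 0)%:R + 2 * schroeder_W n.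
suff: large_schroeder =1 B by [].
apply: (eqmodX_fixpoint_uniq G) => [N p q pq | N | N].
- have Xpq : 'X * (p + p ^+ 2) = 'X * (q + q ^+ 2) %[modX N.+1].
    by apply/eqmodX_mulX; rewrite pq.
  by rewrite /G Xpq.
- exact: large_schroeder_eq.
have BW : trunc N B = 1 + 2%:P * trunc N schroeder_W %[modX N].
  by move=> i Hi; rewrite coefD coefCM coef1 !coef_trunc Hi.
rewrite /G BW; transitivity (1 + 2%:P * ('X * (1 + 3%:P * trunc N schroeder_W
                                + 2%:P * trunc N schroeder_W ^+ 2))).
  by rewrite -schroeder_W_eq.
by apply: eq_eqmodX; ring.
Qed.

Lemma large_schroeder_moment_eq N : trunc N large_schroeder
  = 1 + 'X * (trunc N large_schroeder * (2%:P + 2%:P * trunc N schroeder_W)) %[modX N].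
Proof.
have -> : trunc N large_schroeder = 1 + 2%:P * trunc N schroeder_W %[modX N].
  move=> i Hi; rewrite coef_trunc Hi large_schroeder_little.
  by rewrite coefD coefCM coef1 coef_trunc Hi.
transitivity (1 + 2%:P * ('X * (1 + 3%:P * trunc N schroeder_W
                                + 2%:P * trunc N schroeder_W ^+ 2))).
  by rewrite -schroeder_W_eq.
by apply: eq_eqmodX; ring.
Qed.

Theorem is_moment_sequence_riordan (a b beta : rat) (mu W : fps) :
  b = beta * (a - beta) -> b != 0 ->
  (forall N, trunc N W = 'X * (1 + a%:P * trunc N W + b%:P * trunc N W ^+ 2) %[modX N]) ->
  (forall N, trunc N mu = 1 + 'X * (trunc N mu * (beta%:P + b%:P * trunc N W)) %[modX N]) ->
  is_moment_sequence mu (riordan_poly (fps_inv (fps_of_seq [:: 1; beta]))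
                                      (fmul fX (fps_inv (fps_of_seq [:: 1; a; b])))).
Proof.
move=> b_factor b_neq0 W_eq mu_eq.
apply: (is_moment_sequence_of_table _ _ (jacobi_alpha a beta) (jacobi_lambda b)
                                    (riordan mu W)).
- exact: riordan_poly0.
- exact: riordan_poly_rec.
- by [].
- exact: riordan_row0.
- exact: riordan_col0.
- exact: riordan_production.
- by [].
Qed.

Theorem mainTheorem1 :
  is_moment_sequence large_schroeder
    (riordan_poly (fps_inv (fps_of_seq [:: 1; 2]))
                  (fmul fX (fps_inv (fps_of_seq [:: 1; 3; 2])))) /\
  is_moment_sequence little_schroeder
    (riordan_poly (fps_inv (fps_of_seq [:: 1; 1]))
                  (fmul fX (fps_inv (fps_of_seq [:: 1; 3; 2])))).
Proof.
split; apply: (is_moment_sequence_riordan _ _ _ _ schroeder_W) => //.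
- exact: schroeder_W_eq.
- exact: large_schroeder_moment_eq.
- exact: schroeder_W_eq.
- exact: little_schroeder_moment_eq.
Qed.
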